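(* Let $\kappa,\lambda$ be regular cardinals with $\kappa^+<\lambda$, and let $S\subseteq\{\delta<\lambda:\operatorname{cf}\delta=\kappa\}$ be stationary in $\lambda$. Let $\langle c_\delta:\delta\in S\rangle$ be any sequence such that each $c_\delta\subseteq\delta$ is a club of $\delta$ of order type $\kappa$, and let $E'\subseteq\lambda$ be a club. Then there is a club $E\subseteq E'$ such that, setting $c'_\delta=\operatorname{Drop}(c_\delta,E)$ for $\delta\in S$, the following hold: (1) each $c'_\delta$ is a closed subset of $\delta$; (2) for every club $E''\subseteq\lambda$ the set $\{\delta\in S: c'_\delta\subseteq E'',\ \sup c'_\delta=\delta,\ \operatorname{otp}c'_\delta=\kappa\}$ is stationary in $\lambda$.
   Context: For a set of ordinals $c$ and an ordinal $\alpha$: if $c\cap\alpha\neq\emptyset$, $\operatorname{drop}(\alpha,c)=\sup(c\cap\alpha)$; if $c\cap\alpha=\emptyset$, $\operatorname{drop}(\alpha,c)$ is undefined. For sets of ordinals $X,c$, $\operatorname{Drop}(X,c)=\{\operatorname{drop}(\alpha,c):\alpha\in X\}$ (over those $\alpha$ for which it is defined). $\operatorname{otp}$ denotes order type. *)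

(* Ordinals below lambda are modelled as the elements of an
   arbitrary type T equipped with a strict well-order [lt]; lambda itself is
   the order type of (T, lt). *)
From Stdlib Require Import Classical.

Section Ordinals.
Context {T : Type}.
Variable lt : T -> T -> Prop.

Definition is_wellorder : Prop :=
  (forall x, ~ lt x x) /\
  (forall x y z, lt x y -> lt y z -> lt x z) /\
  (forall x y, lt x y \/ x = y \/ lt y x) /\
  well_founded lt.

Definition le (x y : T) : Prop := lt x y \/ x = y.

Definition otp (X : T -> Prop) (alpha : T) : Prop :=
  exists f : T -> T,
    (forall x, X x -> lt (f x) alpha) /\
    (forall x y, X x -> X y -> lt x y -> lt (f x) (f y)) /\
    (forall b, lt b alpha -> exists x, X x /\ f x = b).

(* otp X = lambda (the order type of the whole of T) *)
Definition otp_full (X : T -> Prop) : Prop := ~ exists alpha, otp X alpha.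

Definition is_sup (X : T -> Prop) (a : T) : Prop :=
  (forall x, X x -> le x a) /\ (forall b, (forall x, X x -> le x b) -> le a b).

(* drop(alpha, c) = sup (c ∩ alpha), defined when c ∩ alpha ≠ ∅ *)
Definition Drop (X c : T -> Prop) : T -> Prop :=
  fun b => exists alpha, X alpha /\ (exists y, c y /\ lt y alpha) /\
           is_sup (fun y => c y /\ lt y alpha) b.

Definition subset (X Y : T -> Prop) : Prop := forall x, X x -> Y x.

Definition limit_point (X : T -> Prop) (gamma : T) : Prop :=
  (exists x, X x /\ lt x gamma) /\
  (forall b, lt b gamma -> exists x, X x /\ lt b x /\ lt x gamma).

Definition closed_below (delta : T) (X : T -> Prop) : Prop :=
  subset X (fun x => lt x delta) /\
  (forall gamma, lt gamma delta -> limit_point X gamma -> X gamma).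

Definition club_of (delta : T) (X : T -> Prop) : Prop :=
  closed_below delta X /\
  (forall b, lt b delta -> exists x, X x /\ lt b x).

Definition club (X : T -> Prop) : Prop :=
  (forall gamma, limit_point X gamma -> X gamma) /\
  (forall b, exists x, X x /\ lt b x).

Definition stationary (S : T -> Prop) : Prop :=
  forall C, club C -> exists d, S d /\ C d.

Definition cofinal_in (delta : T) (X : T -> Prop) : Prop :=
  subset X (fun x => lt x delta) /\
  (forall b, lt b delta -> exists x, X x /\ le b x).

Definition cf_eq (delta kappa : T) : Prop :=
  (exists X, cofinal_in delta X /\ otp X kappa) /\
  (forall X alpha, cofinal_in delta X -> otp X alpha -> le kappa alpha).

Definition equinum (alpha beta : T) : Prop :=
  exists f : T -> T,
    (forall x, lt x alpha -> lt (f x) beta) /\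
    (forall x y, lt x alpha -> lt y alpha -> f x = f y -> x = y) /\
    (forall b, lt b beta -> exists x, lt x alpha /\ f x = b).

Definition is_cardinal (alpha : T) : Prop :=
  forall beta, lt beta alpha -> ~ equinum alpha beta.

(* nonzero limit ordinal; for a cardinal this means infinite *)
Definition nonzero_limit (alpha : T) : Prop :=
  (exists b, lt b alpha) /\ (forall b, lt b alpha -> exists g, lt b g /\ lt g alpha).

Definition regular (kappa : T) : Prop :=
  is_cardinal kappa /\ nonzero_limit kappa /\ cf_eq kappa kappa.

Definition lambda_regular : Prop :=
  (forall beta, ~ exists f : T -> T,
      (forall x, lt (f x) beta) /\ (forall x y, f x = f y -> x = y) /\
      (forall b, lt b beta -> exists x, f x = b)) /\
  (exists x : T, True) /\ (forall b, exists g, lt b g) /\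
  (* cf lambda = lambda *)
  (forall X, (forall b, exists x, X x /\ le b x) -> otp_full X).

(* kappa^+ < lambda: some cardinal mu < lambda exceeds kappa *)
Definition succ_lt_lambda (kappa : T) : Prop :=
  exists mu, lt kappa mu /\ is_cardinal mu.

End Ordinals.

(* Suppose no club E ⊆ E' works.  Since every Drop(c_δ, E) is closed, each club E ⊆ E'
   then has a club H(E) such that for no δ ∈ S ∩ H(E) is Drop(c_δ, E) a subset of H(E)
   with supremum δ and order type κ.  Iterate along a cardinal μ with κ < μ:
   E_z = E' ∩ ⋂_{ξ<z} H(E_ξ), and pick δ ∈ S that is a limit point of E_μ.  For z < μ,
   Drop(c_δ, E_z) is cofinal in δ of order type κ, so some α_z ∈ c_δ has
   drop(α_z, E_z) ∉ H(E_z).  If α_{z1} = α_{z2} with z1 < z2, then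
   drop(α, E_{z2}) < drop(α, E_{z1}), since the former lies in E_{z2} ⊆ H(E_{z1}) and
   the latter does not.  Hence z ↦ α_z maps μ into c_δ ≅ κ with finite fibres,
   contradicting κ < μ. *)

From Stdlib Require Import Classical ClassicalEpsilon FunctionalExtensionality Wellfounded.
From Stdlib Require Import Lia Cantor.

Section WellOrder.
Context {T : Type} (lt : T -> T -> Prop).
Hypothesis Hwo : is_wellorder lt.
Hypothesis Hinh : inhabited T.

Local Notation "x < y" := (lt x y).
Local Notation "x <= y" := (le lt x y).

Lemma lt_irrefl x : ~ x < x. Proof. apply Hwo. Qed.
Lemma lt_trans x y z : x < y -> y < z -> x < z. Proof. apply Hwo. Qed.
Lemma lt_trichotomy x y : x < y \/ x = y \/ y < x. Proof. apply Hwo. Qed.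
Lemma lt_wf : well_founded lt. Proof. apply Hwo. Qed.

Lemma le_refl x : x <= x. Proof. now right. Qed.
Lemma lt_le x y : x < y -> x <= y. Proof. now left. Qed.
Lemma le_trans x y z : x <= y -> y <= z -> x <= z.
Proof. intros [H|H] [H'|H']; subst; unfold le; eauto using lt_trans. Qed.
Lemma lt_le_trans x y z : x < y -> y <= z -> x < z.
Proof. intros H [H'|H']; subst; eauto using lt_trans. Qed.
Lemma le_lt_trans x y z : x <= y -> y < z -> x < z.
Proof. intros [H|H] H'; subst; eauto using lt_trans. Qed.
Lemma not_lt_le x y : ~ x < y -> y <= x.
Proof.
  intro H. destruct (lt_trichotomy x y) as [h|[->|h]]; [tauto | apply le_refl | now left].
Qed.
Lemma le_not_lt x y : x <= y -> ~ y < x.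
Proof. intros H H'. apply (lt_irrefl x). eapply le_lt_trans; eauto. Qed.
Lemma le_antisym x y : x <= y -> y <= x -> x = y.
Proof. intros [H|H] H'; auto. exfalso; eapply le_not_lt; eauto. Qed.

Lemma lt_wf_min (P : T -> Prop) :
  (exists x, P x) -> exists x, P x /\ forall y, P y -> x <= y.
Proof.
  intros [x Hx]. apply NNPP; intro Hn. revert Hx.
  induction x as [x IH] using (well_founded_ind lt_wf). intro Px.
  apply Hn. exists x. split; auto. intros y Py. apply not_lt_le. intro h. exact (IH _ h Py).
Qed.

Definition least (P : T -> Prop) : T :=
  epsilon Hinh (fun x => P x /\ forall y, P y -> x <= y).

Lemma least_spec P : (exists x, P x) -> P (least P) /\ forall y, P y -> least P <= y.
Proof. intro H. unfold least. apply epsilon_spec, lt_wf_min, H. Qed.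

Lemma Fix_unfold {A : Type} (F : forall x, (forall y, y < x -> A) -> A) x :
  Fix lt_wf (fun _ => A) F x = F x (fun y _ => Fix lt_wf (fun _ => A) F y).
Proof.
  apply (Fix_eq lt_wf (fun _ => A) F). intros x0 f g H. f_equal.
  do 2 (apply functional_extensionality_dep; intro). auto.
Qed.

Lemma strict_mono_ge (phi : T -> T) beta :
  (forall x y, x < y -> y < beta -> phi x < phi y) -> forall x, x < beta -> x <= phi x.
Proof.
  intros Hinc x. induction x as [x IH] using (well_founded_ind lt_wf). intro hx.
  apply not_lt_le; intro h.
  apply (le_not_lt _ _ (IH _ h (lt_trans _ _ _ h hx)) (Hinc _ _ h hx)).
Qed.

(* The transitive collapse of [Y]: [collapse Y y] is the order type of [Y] below [y]. *)
Section Collapse.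
Variable Y : T -> Prop.

Definition collapse : T -> T := Fix lt_wf (fun _ => T)
  (fun y rec => least (fun t => forall y' (H : y' < y), Y y' -> rec y' H < t)).

Lemma collapse_eq y : collapse y = least (fun t => forall y', y' < y -> Y y' -> collapse y' < t).
Proof. unfold collapse at 1. now rewrite Fix_unfold. Qed.

Lemma collapse_le y :
  Y y -> collapse y <= y /\ forall y', y' < y -> Y y' -> collapse y' < collapse y.
Proof.
  induction y as [y IH] using (well_founded_ind lt_wf). intro Yy.
  assert (Hy : forall y', y' < y -> Y y' -> collapse y' < y).
  { intros y' h Yy'. exact (le_lt_trans _ _ _ (proj1 (IH _ h Yy')) h). }
  destruct (least_spec (fun t => forall y', y' < y -> Y y' -> collapse y' < t)
    (ex_intro _ y Hy)) as [H1 H2].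
  rewrite collapse_eq. auto.
Qed.

Lemma collapse_strict x y : Y x -> Y y -> x < y -> collapse x < collapse y.
Proof. intros Hx Hy h. now apply (collapse_le y Hy). Qed.

Lemma collapse_down y : Y y -> forall b, b < collapse y -> exists x, Y x /\ collapse x = b.
Proof.
  induction y as [y IH] using (well_founded_ind lt_wf). intros Yy b Hb.
  assert (Hex : exists t, forall y', y' < y -> Y y' -> collapse y' < t).
  { exists (collapse y). intros y' h Yy'. now apply collapse_strict. }
  destruct (least_spec _ Hex) as [_ Hmin]. rewrite <- collapse_eq in Hmin.
  destruct (classic (forall y', y' < y -> Y y' -> collapse y' < b)) as [Hall|Hn].
  - destruct (le_not_lt _ _ (Hmin _ Hall) Hb).
  - apply not_all_ex_not in Hn as [y' Hn].
    apply imply_to_and in Hn as [h Hn]. apply imply_to_and in Hn as [Yy' Hn].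
    destruct (not_lt_le _ _ Hn) as [Hlt| ->]; [eapply IH|]; eauto.
Qed.

Lemma collapse_range : (exists t, forall y, Y y -> collapse y <> t) ->
  exists beta, (forall t, (forall y, Y y -> collapse y <> t) -> beta <= t) /\
    (forall x, Y x -> collapse x < beta) /\
    (forall b, b < beta -> exists x, Y x /\ collapse x = b).
Proof.
  intro Hex. destruct (least_spec _ Hex) as [Hmiss Hmin].
  exists (least (fun t => forall y, Y y -> collapse y <> t)). split; [auto|split].
  - intros x Yx. apply NNPP; intro Hn. destruct (not_lt_le _ _ Hn) as [h|h].
    + destruct (collapse_down x Yx _ h) as [x' [Yx' e]]. exact (Hmiss x' Yx' e).
    + exact (Hmiss x Yx (eq_sym h)).
  - intros b hb. apply NNPP; intro Hn. refine (le_not_lt _ _ (Hmin b _) hb).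
    intros y Yy e. apply Hn. eauto.
Qed.

Lemma collapse_otp z : (forall y, Y y -> y < z) -> exists beta, beta <= z /\ otp lt Y beta.
Proof.
  intro Hz.
  assert (Hmiss : forall y, Y y -> collapse y <> z).
  { intros y Yy e. apply (le_not_lt _ _ (proj1 (collapse_le y Yy))). rewrite e. auto. }
  destruct (collapse_range (ex_intro _ z Hmiss)) as [beta [H1 [H2 H3]]].
  exists beta. split; auto. exists collapse. repeat split; auto using collapse_strict.
Qed.

Lemma collapse_onto : ~ (exists beta, otp lt Y beta) -> forall t, exists y, Y y /\ collapse y = t.
Proof.
  intros Hn t. apply NNPP; intro Ht. apply Hn.
  destruct collapse_range as [beta [_ [H2 H3]]].
  { exists t. intros y Yy e. apply Ht. eauto. }
  exists beta, collapse. repeat split; auto using collapse_strict.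
Qed.
End Collapse.

Lemma bounded_injection_collapse (D : T -> Prop) (h : T -> T) z :
  (forall x, D x -> h x < z) -> (forall x y, D x -> D y -> h x = h y -> x = y) ->
  exists beta f, beta <= z /\ (forall x, D x -> f x < beta) /\
     (forall x y, D x -> D y -> f x = f y -> x = y) /\
     (forall b, b < beta -> exists x, D x /\ f x = b).
Proof.
  intros Hz Hinj. set (Y := fun y => exists x, D x /\ h x = y).
  destruct (collapse_otp Y z) as [beta [Hbeta [f [F1 [F2 F3]]]]].
  { intros y [x [Dx <-]]. auto. }
  exists beta, (fun x => f (h x)). repeat split; auto.
  - intros x Dx. apply F1. now exists x.
  - intros x y Dx Dy e. apply Hinj; auto. apply NNPP; intro hne.
    destruct (lt_trichotomy (h x) (h y)) as [hl|[hl|hl]]; [| tauto |];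
      apply F2 in hl; try (eexists; eauto); rewrite e in hl; exact (lt_irrefl _ hl).
  - intros b hb. destruct (F3 b hb) as [y [[x [Dx <-]] e]]. eauto.
Qed.

Lemma otp_le_of_strict_mono (X Y : T -> Prop) beta kappa (p : T -> T) :
  otp lt X beta -> otp lt Y kappa ->
  (forall x, X x -> Y (p x)) -> (forall x y, X x -> X y -> x < y -> p x < p y) ->
  beta <= kappa.
Proof.
  intros [fX [FX1 [FX2 FX3]]] [fY [FY1 [FY2 _]]] HpY Hp.
  apply not_lt_le; intro hkb.
  set (inv := fun xi => epsilon Hinh (fun x => X x /\ fX x = xi)).
  assert (Hinv : forall xi, xi < beta -> X (inv xi) /\ fX (inv xi) = xi).
  { intros xi hxi. apply epsilon_spec, FX3, hxi. }
  assert (Hmono : forall xi xi', xi < xi' -> xi' < beta -> fY (p (inv xi)) < fY (p (inv xi'))).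
  { intros xi xi' h h'. destruct (Hinv xi (lt_trans _ _ _ h h')) as [Xx ex].
    destruct (Hinv xi' h') as [Xx' ex'].
    apply FY2, Hp; auto.
    destruct (lt_trichotomy (inv xi) (inv xi')) as [l|[l|l]]; auto; exfalso.
    - rewrite l, ex' in ex. subst. exact (lt_irrefl _ h).
    - apply FX2 in l; auto. rewrite ex, ex' in l. exact (lt_irrefl _ (lt_trans _ _ _ h l)). }
  apply (le_not_lt _ _ (strict_mono_ge _ beta Hmono kappa hkb)).
  apply FY1, HpY, Hinv, hkb.
Qed.

Lemma limit_point_mono (X Y : T -> Prop) g :
  subset X Y -> limit_point lt X g -> limit_point lt Y g.
Proof.
  intros HXY [[x [Xx hx]] H]. split; [eauto|].
  intros b hb. destruct (H b hb) as [y [Xy hy]]. eauto.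
Qed.

Lemma sup_exists (X : T -> Prop) z : (forall x, X x -> x <= z) -> exists b, is_sup lt X b.
Proof.
  intro Hz. destruct (least_spec (fun b => forall x, X x -> x <= b)) as [H1 H2]; [eauto|].
  eexists. split; eauto.
Qed.

Lemma sup_mono (X Y : T -> Prop) a b :
  subset X Y -> is_sup lt X a -> is_sup lt Y b -> a <= b.
Proof. intros HXY [_ Ha] [Hb _]. apply Ha. auto. Qed.

Lemma sup_cofinal (X : T -> Prop) d :
  (forall x, X x -> x < d) -> is_sup lt X d -> cofinal_in lt d X.
Proof.
  intros Hd [_ Hmin]. split; [exact Hd|]. intros b hb. apply NNPP; intro Hn.
  refine (le_not_lt _ _ (Hmin b _) hb). intros x Xx. apply not_lt_le. intro h.
  apply Hn. exists x. split; [|apply lt_le]; auto.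
Qed.

(* The supremum is either attained or a limit point of [X]. *)
Lemma sup_closed (E X : T -> Prop) b : (forall g, limit_point lt E g -> E g) -> subset X E ->
  (exists x, X x) -> is_sup lt X b -> E b.
Proof.
  intros HE HXE [x0 Hx0] [Hub Hmin]. destruct (classic (X b)) as [Xb|nXb]; [auto|].
  assert (Hbelow : forall x, X x -> x < b).
  { intros x Xx. destruct (Hub x Xx) as [h| ->]; [auto | contradiction]. }
  apply HE, (limit_point_mono X); auto. split; [eauto|].
  intros b' hb'. apply NNPP; intro Hn. refine (le_not_lt _ _ (Hmin b' _) hb').
  intros x Xx. apply not_lt_le. intro h. apply Hn. eauto.
Qed.

Section Drop.
Variables C E : T -> Prop.
Hypothesis HE : forall g, limit_point lt E g -> E g.

Let D := Drop lt C E.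

Lemma Drop_witness x : D x -> exists a, C a /\ is_sup lt (fun y => E y /\ y < a) x /\ x <= a.
Proof.
  intros [a [Ca [_ Hs]]]. exists a. split; [|split]; auto.
  apply Hs. intros y [_ hy]. now apply lt_le.
Qed.

Lemma Drop_sub : subset D E.
Proof.
  intros x [a [Ca [Hne Hs]]]. apply (sup_closed E (fun y => E y /\ y < a) x HE); auto.
  now intros y [].
Qed.

Lemma Drop_of_limit_point g : C g -> limit_point lt E g -> D g.
Proof.
  intros Cg [Hne Hlim]. exists g. split; [|split]; auto. split.
  - intros y [_ hy]. now apply lt_le.
  - intros b Hb. apply not_lt_le; intro hb. destruct (Hlim b hb) as [y [Ey [h1 h2]]].
    exact (le_not_lt _ _ (Hb y (conj Ey h2)) h1).
Qed.

Lemma Drop_witness_below g x : E g -> D x -> x < g -> exists a, C a /\ x <= a /\ a <= g.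
Proof.
  intros Eg Dx hx. destruct (Drop_witness x Dx) as [a [Ca [[Hub _] hxa]]].
  exists a. repeat split; auto. apply not_lt_le; intro hga.
  exact (le_not_lt _ _ (Hub g (conj Eg hga)) hx).
Qed.

Lemma Drop_closed_below d : club_of lt d C -> closed_below lt d D.
Proof.
  intros [[HCd HCc] _]. split.
  - intros x Dx. destruct (Drop_witness x Dx) as [a [Ca [_ hxa]]]. eapply le_lt_trans; eauto.
  - intros g hg Hlp.
    assert (HEg : limit_point lt E g) by exact (limit_point_mono D E g Drop_sub Hlp).
    apply Drop_of_limit_point; auto. apply NNPP; intro nCg. apply nCg, HCc; auto.
    destruct Hlp as [[x [Dx hx]] Hlim].
    assert (Hwit : forall x, D x -> x < g -> exists a, C a /\ x <= a /\ a < g).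
    { intros x' Dx' hx'. destruct (Drop_witness_below g x' (HE g HEg) Dx' hx')
        as [a [Ca [h1 [h2| ->]]]]; [eauto | contradiction]. }
    split.
    + destruct (Hwit x Dx hx) as [a [Ca [_ ha]]]. eauto.
    + intros b hb. destruct (Hlim b hb) as [x' [Dx' [h1 h2]]].
      destruct (Hwit x' Dx' h2) as [a [Ca [h3 h4]]]. exists a. eauto using lt_le_trans.
Qed.

Lemma Drop_sup d : club_of lt d C -> limit_point lt E d -> is_sup lt D d.
Proof.
  intros [[HCd _] HCu] [_ Hlim]. split.
  - intros x Dx. destruct (Drop_witness x Dx) as [a [Ca [_ hxa]]]. apply lt_le.
    eapply le_lt_trans; eauto.
  - intros b Hb. apply not_lt_le; intro hb.
    destruct (Hlim b hb) as [e [Ee [h1 h2]]]. destruct (HCu e h2) as [a [Ca ha]].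
    destruct (sup_exists (fun y => E y /\ y < a) a) as [s Hs].
    { intros y [_ hy]. now apply lt_le. }
    assert (Ds : D s) by (exists a; eauto).
    refine (le_not_lt _ _ (le_trans _ _ _ (proj1 Hs e (conj Ee ha)) (Hb s Ds)) h1).
Qed.

Lemma Drop_strict_mono : exists p, (forall y, D y -> C (p y)) /\
  forall y y', D y -> D y' -> y < y' -> p y < p y'.
Proof.
  set (W := fun y a => C a /\ (exists e, E e /\ e < a) /\ is_sup lt (fun e => E e /\ e < a) y).
  exists (fun y => least (W y)).
  assert (Hp : forall y, D y -> W y (least (W y))) by (intros y Dy; now apply (least_spec (W y))).
  split; [intros y Dy; apply Hp, Dy|].
  intros y y' Dy Dy' hy. destruct (Hp y Dy) as [_ [_ Hs]]. destruct (Hp y' Dy') as [_ [_ Hs']].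
  apply NNPP; intro Hn. refine (le_not_lt _ _ _ hy).
  refine (sup_mono _ _ _ _ _ Hs' Hs). intros e [Ee he]. split; auto.
  eapply lt_le_trans; [exact he | now apply not_lt_le].
Qed.

Lemma Drop_otp d kappa : club_of lt d C -> otp lt C kappa -> cf_eq lt d kappa ->
  is_sup lt D d -> otp lt D kappa.
Proof.
  intros HC HCk [_ Hcf] Hsup.
  assert (HDd : forall x, D x -> x < d).
  { intros x Dx. now apply (proj1 (Drop_closed_below d HC)). }
  destruct (collapse_otp D d HDd) as [beta [_ Hbeta]].
  destruct Drop_strict_mono as [p [HpC Hp]].
  replace kappa with beta; [exact Hbeta|].
  apply le_antisym.
  - exact (otp_le_of_strict_mono D C beta kappa p Hbeta HCk HpC Hp).
  - exact (Hcf D beta (sup_cofinal D d HDd Hsup) Hbeta).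
Qed.
End Drop.

Hypothesis Hlam : lambda_regular lt.

Lemma exists_gt b : exists g, b < g.
Proof. apply Hlam. Qed.

Lemma exists_gt2 x y : exists t, x < t /\ y < t.
Proof.
  destruct (exists_gt x) as [u hu], (exists_gt y) as [v hv].
  destruct (lt_trichotomy u v) as [h|[<-|h]]; eauto using lt_trans.
Qed.

(* Otherwise the image is cofinal, hence of order type lambda, and its collapse yields an
   injection of lambda into [z]. *)
Lemma bounded_image (I : T -> Prop) z (F : T -> T) :
  (forall e, I e -> e < z) -> exists c, forall e, I e -> F e < c.
Proof.
  intro Hz. apply NNPP; intro Hn.
  set (Y := fun x => exists e, I e /\ F e = x).
  assert (Hcof : forall b, exists x, Y x /\ b <= x).
  { intro b. apply NNPP; intro H. apply Hn. exists b. intros e Ie. apply NNPP; intro h.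
    apply H. exists (F e). split; [now exists e | now apply not_lt_le]. }
  destruct Hlam as [Hcard [_ [_ Hcf]]].
  assert (Hpre : forall t, exists e, I e /\ collapse Y (F e) = t).
  { intro t. destruct (collapse_onto Y (Hcf Y Hcof) t) as [y [[e [Ie <-]] Ht]]. eauto. }
  apply choice in Hpre as [inj Hinj].
  destruct (bounded_injection_collapse (fun _ => True) inj z) as [beta [f [_ [F1 [F2 F3]]]]].
  - intros t _. apply Hz, Hinj.
  - intros x y _ _ e. rewrite <- (proj2 (Hinj x)), <- (proj2 (Hinj y)), e. reflexivity.
  - apply (Hcard beta). exists f. repeat split; auto.
    intros b hb. destruct (F3 b hb) as [x [_ ?]]; eauto.
Qed.

Lemma bounded_union (I : T -> Prop) z (Q : T -> T -> Prop) : (forall e, I e -> e < z) ->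
  (forall e, I e -> exists c, forall y, Q e y -> y < c) ->
  exists c, forall e, I e -> forall y, Q e y -> y < c.
Proof.
  intros Hz HQ. set (bound := fun e => least (fun c => forall y, Q e y -> y < c)).
  destruct (bounded_image I z bound Hz) as [c Hc]. exists c. intros e Ie y Qy.
  apply lt_trans with (bound e); auto.
  now apply (least_spec (fun c => forall y, Q e y -> y < c) (HQ e Ie)).
Qed.

Section Clubs.
Variable theta : T.
Hypothesis Htheta : nonzero_limit lt theta.

(* [g] is the supremum of a [theta]-sequence [s] such that [F] maps everything up to
   [s xi] below every later term. *)
Lemma exists_closure_point (F : T -> T) b0 : exists g, b0 < g /\ forall b, b < g -> F b < g.
Proof.
  set (P := fun (s : T -> T) xi t =>
    b0 < t /\ forall xi', xi' < xi -> forall b, b <= s xi' -> F b < t).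
  set (s := Fix lt_wf (fun _ => T) (fun xi rec => least (fun t => b0 < t /\
              forall xi' (H : xi' < xi) b, b <= rec xi' H -> F b < t))).
  assert (HP : forall xi, P s xi (s xi)).
  { intro xi.
    assert (Hs : s xi = least (P s xi)) by (unfold s at 1; now rewrite Fix_unfold).
    rewrite Hs. apply (least_spec (P s xi)).
    destruct (bounded_union (fun xi' => xi' < xi) xi
      (fun xi' y => exists b, b <= s xi' /\ F b = y)) as [c Hc]; auto.
    { intros xi' _. destruct (exists_gt (s xi')) as [u hu].
      destruct (bounded_image (fun b => b <= s xi') u F) as [c Hc].
      { intros b hb. eapply le_lt_trans; eauto. }
      exists c. intros y [b [hb <-]]. auto. }
    destruct (exists_gt2 b0 c) as [t [h1 h2]]. exists t. split; auto.
    intros xi' hxi b hb. eapply lt_trans; [apply (Hc xi')|]; eauto. }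
  destruct Htheta as [[xi0 Hxi0] Hlim].
  destruct (bounded_image (fun xi => xi < theta) theta s) as [c Hc]; auto.
  set (Ub := fun g => forall xi, xi < theta -> s xi <= g).
  destruct (least_spec Ub) as [G1 G2].
  { exists c. intros xi hxi. now apply lt_le, Hc. }
  exists (least Ub). split.
  - exact (lt_le_trans _ _ _ (proj1 (HP xi0)) (G1 xi0 Hxi0)).
  - intros b hb.
    assert (Hxi : exists xi, xi < theta /\ b < s xi).
    { apply NNPP; intro Hn. refine (le_not_lt _ _ (G2 b _) hb).
      intros xi hxi. apply not_lt_le. intro h. apply Hn. eauto. }
    destruct Hxi as [xi [hxi hb']]. destruct (Hlim xi hxi) as [xi1 [h1 h2]].
    eapply lt_le_trans; [apply (proj2 (HP xi1) xi h1 b (lt_le _ _ hb')) | apply G1, h2].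
Qed.

Lemma exists_common_limit_point (I : T -> Prop) z (C : T -> T -> Prop) :
  (forall e, I e -> e < z) -> (forall e, I e -> forall b, exists x, C e x /\ b < x) ->
  forall b0, exists g, b0 < g /\ forall e, I e -> limit_point lt (C e) g.
Proof.
  intros Hz HC b0.
  assert (Hstep : forall x, exists t, forall e, I e -> exists y, C e y /\ x < y /\ y < t).
  { intro x. set (next := fun e => least (fun y => C e y /\ x < y)).
    destruct (bounded_image I z next Hz) as [t Ht]. exists t. intros e Ie.
    exists (next e). split; [|split]; auto;
      now apply (least_spec (fun y => C e y /\ x < y)), HC. }
  apply choice in Hstep as [F HF].
  destruct (exists_closure_point F b0) as [g [hg Hg]].
  exists g. split; auto. intros e Ie. split.
  - destruct (HF b0 e Ie) as [y [Cy [_ hy]]]. exists y. split; eauto using lt_trans.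
  - intros b hb. destruct (HF b e Ie) as [y [Cy [h1 h2]]]. exists y. eauto using lt_trans.
Qed.

Lemma club_bigcap (I : T -> Prop) z (C : T -> T -> Prop) :
  (forall e, I e -> e < z) -> (forall e, I e -> club lt (C e)) ->
  club lt (fun x => forall e, I e -> C e x).
Proof.
  intros Hz HC. split.
  - intros g Hg e Ie. apply (HC e Ie).
    eapply limit_point_mono; [|exact Hg]. now intros x Hx; apply Hx.
  - intros b. destruct (exists_common_limit_point I z C Hz) with (b0 := b) as [g [hg Hg]].
    { intros e Ie. apply (HC e Ie). }
    exists g. split; auto. intros e Ie. now apply (HC e Ie), Hg.
Qed.

Lemma club_and (A B : T -> Prop) : club lt A -> club lt B -> club lt (fun x => A x /\ B x).
Proof.
  intros HA HB. split.
  - intros g Hg. split; [apply HA | apply HB]; eapply limit_point_mono; eauto; now intros x [].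
  - intros b. destruct Hinh as [t0].
    destruct (exists_gt t0) as [t1 h01]. destruct (exists_gt t1) as [z h1z].
    set (AB := fun e x => (e = t0 -> A x) /\ (e <> t0 -> B x)).
    destruct (exists_common_limit_point (fun e => e = t0 \/ e = t1) z AB) with (b0 := b)
      as [g [hg Hg]].
    + intros e [-> | ->]; eauto using lt_trans.
    + intros e _ b'. destruct (classic (e = t0)) as [He|He].
      * destruct (proj2 HA b') as [x [Ax hx]]. exists x. split; [split|]; tauto.
      * destruct (proj2 HB b') as [x [Bx hx]]. exists x. split; [split|]; tauto.
    + exists g. split; auto. split.
      * apply HA, (limit_point_mono (AB t0)); [|apply Hg; auto]. intros x [Hx _]. auto.
      * apply HB, (limit_point_mono (AB t1)); [|apply Hg; auto]. intros x [_ Hx].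
        apply Hx. intros ->. exact (lt_irrefl _ h01).
Qed.

Lemma club_limit_points (E : T -> Prop) : club lt E -> club lt (limit_point lt E).
Proof.
  intros HE. split.
  - intros g [[a [[[x [Ex hx]] _] ha]] Hlim]. split.
    + exists x. eauto using lt_trans.
    + intros b hb. destruct (Hlim b hb) as [a' [[_ Ha'] [h1 h2]]].
      destruct (Ha' b h1) as [y [Ey [h3 h4]]]. exists y. eauto using lt_trans.
  - intros b. destruct (exists_gt b) as [z hz].
    destruct (exists_common_limit_point (fun e => e = b) z (fun _ => E)) with (b0 := b)
      as [g [hg Hg]].
    + now intros e ->.
    + intros e _. apply HE.
    + exists g. split; auto. now apply (Hg b).
Qed.
End Clubs.

Definition succ x := least (fun y => x < y).

Lemma succ_spec x : x < succ x /\ forall y, x < y -> succ x <= y.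
Proof. apply (least_spec (fun y => x < y)), exists_gt. Qed.

Lemma succ_inj x y : succ x = succ y -> x = y.
Proof.
  intro e. destruct (lt_trichotomy x y) as [h|[h|h]]; auto; exfalso.
  - apply (le_not_lt _ _ (proj2 (succ_spec x) y h)). rewrite e. apply succ_spec.
  - apply (le_not_lt _ _ (proj2 (succ_spec y) x h)). rewrite <- e. apply succ_spec.
Qed.

Definition is_succ t := exists x, t = succ x.

Lemma iter_succ_ge l n : l <= Nat.iter n succ l.
Proof.
  induction n as [|n IH]; [apply le_refl|].
  exact (le_trans _ _ _ IH (lt_le _ _ (proj1 (succ_spec _)))).
Qed.

Lemma succ_decomposition t : exists l n, ~ is_succ l /\ t = Nat.iter n succ l.
Proof.
  induction t as [t IH] using (well_founded_ind lt_wf).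
  destruct (classic (is_succ t)) as [[x ->]|ns].
  - destruct (IH x (proj1 (succ_spec x))) as [l [n [hl ->]]]. now exists l, (S n).
  - now exists t, 0.
Qed.

Lemma succ_decomposition_unique l l' n n' : ~ is_succ l -> ~ is_succ l' ->
  Nat.iter n succ l = Nat.iter n' succ l' -> l = l' /\ n = n'.
Proof.
  intros hl hl'. revert n'. induction n as [|n IH]; intros [|n'] e; simpl in e.
  - auto.
  - exfalso; apply hl; eexists; eauto.
  - exfalso; apply hl'; eexists; eauto.
  - apply succ_inj, IH in e as [-> ->]. auto.
Qed.

Definition decomposition xi : T * nat :=
  epsilon (inhabits (xi, 0)) (fun p => ~ is_succ (fst p) /\ xi = Nat.iter (snd p) succ (fst p)).

Lemma decomposition_spec xi : ~ is_succ (fst (decomposition xi)) /\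
  xi = Nat.iter (snd (decomposition xi)) succ (fst (decomposition xi)).
Proof.
  unfold decomposition. apply epsilon_spec.
  destruct (succ_decomposition xi) as [l [n H]]. now exists (l, n).
Qed.

(* [l + m] is sent to [l + <m, n>], with [<_, _>] the Cantor pairing. *)
Definition pair_code xi n :=
  Nat.iter (Cantor.to_nat (snd (decomposition xi), n)) succ (fst (decomposition xi)).

Lemma pair_code_inj xi xi' n n' : pair_code xi n = pair_code xi' n' -> xi = xi' /\ n = n'.
Proof.
  intro e. destruct (decomposition_spec xi) as [hl ->], (decomposition_spec xi') as [hl' ->].
  apply succ_decomposition_unique in e as [el en]; auto.
  apply Cantor.to_nat_inj in en. injection en as en1 en2. now rewrite el, en1.
Qed.

Lemma pair_code_lt kappa xi n : (forall b, b < kappa -> exists g, b < g /\ g < kappa) ->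
  xi < kappa -> pair_code xi n < kappa.
Proof.
  intros Hlim hxi. destruct (decomposition_spec xi) as [_ e].
  assert (hl : fst (decomposition xi) < kappa).
  { eapply le_lt_trans; [|exact hxi]. rewrite e at 2. apply iter_succ_ge. }
  unfold pair_code. induction (Cantor.to_nat _) as [|m IH]; [exact hl|].
  destruct (Hlim _ IH) as [g [h1 h2]]. exact (le_lt_trans _ _ _ (proj2 (succ_spec _) g h1) h2).
Qed.

Section FiberRank.
Variables (mu : T) (g w : T -> T).
Hypothesis Hw : forall z1 z2, z1 < z2 -> z2 < mu -> g z1 = g z2 -> w z2 < w z1.

Let later z z' := z < z' /\ z' < mu /\ g z' = g z.

(* [fiber_rank z n]: exactly [n] points after [z] below [mu] have the same [g]-value. *)
Inductive fiber_rank : T -> nat -> Prop :=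
| fiber_rank_last z : ~ (exists z', later z z') -> fiber_rank z 0
| fiber_rank_next z z' n : later z z' -> (forall z'', later z z'' -> z' <= z'') ->
    fiber_rank z' n -> fiber_rank z (S n).

Lemma fiber_rank_exists z : exists n, fiber_rank z n.
Proof.
  induction z as [z IH] using (well_founded_ind (wf_inverse_image T T lt w lt_wf)).
  destruct (classic (exists z', later z z')) as [Hex|Hn].
  - destruct (least_spec (later z) Hex) as [[h1 [h2 h3]] Hmin].
    destruct (IH (least (later z))) as [n Hn]; [apply Hw; auto|].
    exists (S n). apply fiber_rank_next with (least (later z)); [split|..]; auto.
  - exists 0. now constructor.
Qed.

Lemma fiber_rank_unique z n n' : fiber_rank z n -> fiber_rank z n' -> n = n'.
Proof.
  intro H. revert n'.
  induction H as [z Hn|z z' n Hl Hmin Hr IH]; intros n' H'; inversion H'; subst; auto.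
  - exfalso. apply Hn. eauto.
  - exfalso. apply H. eauto.
  - f_equal. apply IH. replace z' with z'0; auto. apply le_antisym; auto.
Qed.

Lemma fiber_rank_later z1 n1 z2 n2 : fiber_rank z1 n1 -> later z1 z2 -> fiber_rank z2 n2 ->
  (n2 < n1)%nat.
Proof.
  intro H. revert z2 n2.
  induction H as [z Hn|z z' n Hl Hmin Hr IH]; intros z2 n2 Hl2 Hr2.
  - exfalso. apply Hn. eauto.
  - destruct Hl as [h1 [h2 h3]], Hl2 as [h4 [h5 h6]].
    destruct (Hmin z2 (conj h4 (conj h5 h6))) as [hl| ->].
    + enough (n2 < n)%nat by lia. apply (IH z2); auto. repeat split; congruence.
    + rewrite (fiber_rank_unique _ _ _ Hr2 Hr). lia.
Qed.
End FiberRank.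

(* The fibres of [g] are reverse well-ordered by [w], hence finite, so [mu] would have
   size at most [kappa * omega = kappa]. *)
Lemma no_finite_to_one_map kappa mu (g w : T -> T) : nonzero_limit lt kappa ->
  kappa < mu -> is_cardinal lt mu ->
  (forall z, z < mu -> g z < kappa) ->
  (forall z1 z2, z1 < z2 -> z2 < mu -> g z1 = g z2 -> w z2 < w z1) -> False.
Proof.
  intros [_ Hlim] Hmu Hcard Hg Hw.
  destruct (choice _ (fiber_rank_exists mu g w Hw)) as [r Hr].
  destruct (bounded_injection_collapse (fun z => z < mu) (fun z => pair_code (g z) (r z)) kappa)
    as [beta [f [Hb [F1 [F2 F3]]]]].
  - intros z hz. now apply pair_code_lt, Hg.
  - intros x y hx hy e. apply pair_code_inj in e as [e1 e2].
    destruct (lt_trichotomy x y) as [h|[h|h]]; auto; exfalso.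
    + pose proof (fiber_rank_later mu g _ _ _ _ (Hr x) (conj h (conj hy (eq_sym e1))) (Hr y)). lia.
    + pose proof (fiber_rank_later mu g _ _ _ _ (Hr y) (conj h (conj hx e1)) (Hr x)). lia.
  - apply (Hcard beta); [eapply le_lt_trans; eauto|]. exists f. repeat split; auto.
Qed.

Section Shrinking.
Variables (S : T -> Prop) (c : T -> T -> Prop) (E' : T -> Prop) (kappa : T).
Hypothesis Hkappa : nonzero_limit lt kappa.
Hypothesis Hsucc : succ_lt_lambda lt kappa.
Hypothesis HScf : forall d, S d -> cf_eq lt d kappa.
Hypothesis HSst : stationary lt S.
Hypothesis Hc : forall d, S d -> club_of lt d (c d) /\ otp lt (c d) kappa.
Hypothesis HE' : club lt E'.

Definition guesses (E G : T -> Prop) d :=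
  subset (Drop lt (c d) E) G /\ is_sup lt (Drop lt (c d) E) d /\ otp lt (Drop lt (c d) E) kappa.

Lemma escaping_club E :
  ~ (forall E'', club lt E'' -> stationary lt (fun d => S d /\ guesses E E'' d)) ->
  exists G, club lt G /\ forall d, S d -> G d -> ~ guesses E G d.
Proof.
  intro Hn. apply not_all_ex_not in Hn as [E'' Hn]. apply imply_to_and in Hn as [HE'' Hn].
  apply not_all_ex_not in Hn as [C Hn]. apply imply_to_and in Hn as [HC Hn].
  exists (fun x => E'' x /\ C x). split; [now apply (club_and kappa Hkappa)|].
  intros d Sd [E''d Cd] [Hsub Hg]. apply Hn. exists d. split; [split; [exact Sd|] | exact Cd].
  split; [|exact Hg]. intros x Dx. now apply Hsub.
Qed.

Section Descent.
Variable H : (T -> Prop) -> T -> Prop.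
Hypothesis H_club : forall E, club lt (H E).
Hypothesis H_escapes :
  forall E, club lt E -> subset E E' -> forall d, S d -> H E d -> ~ guesses E (H E) d.

Definition descent : T -> T -> Prop := Fix lt_wf (fun _ => T -> Prop)
  (fun z rec x => E' x /\ forall xi (h : xi < z), H (rec xi h) x).

Lemma descent_eq z : descent z = fun x => E' x /\ forall xi, xi < z -> H (descent xi) x.
Proof. unfold descent at 1. now rewrite Fix_unfold. Qed.

Lemma descent_club z : club lt (descent z).
Proof.
  rewrite descent_eq. apply (club_and kappa Hkappa); auto.
  apply (club_bigcap kappa Hkappa _ z); auto.
Qed.

Lemma descent_sub z : subset (descent z) E'.
Proof. intros x. rewrite descent_eq. now intros []. Qed.

Lemma descent_mono z1 z2 : z1 < z2 ->
  subset (descent z2) (descent z1) /\ subset (descent z2) (H (descent z1)).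
Proof.
  intro h. split; intros x; rewrite (descent_eq z2); intros [E'x Hx]; auto.
  rewrite descent_eq. split; auto. intros xi hxi. apply Hx. eauto using lt_trans.
Qed.

Definition escapes z a b := (exists y, descent z y /\ y < a) /\
  is_sup lt (fun y => descent z y /\ y < a) b /\ ~ H (descent z) b.

Lemma escapes_decreasing z1 z2 a b1 b2 : z1 < z2 -> escapes z1 a b1 -> escapes z2 a b2 -> b2 < b1.
Proof.
  intros h12 [_ [Hs1 Hn1]] [Hne2 [Hs2 _]]. destruct (descent_mono z1 z2 h12) as [Hsub HsubH].
  assert (Hb2 : descent z2 b2).
  { apply (sup_closed _ (fun y => descent z2 y /\ y < a) b2); auto.
    - apply descent_club.
    - now intros y []. }
  assert (Hsub' : subset (fun y => descent z2 y /\ y < a) (fun y => descent z1 y /\ y < a)).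
  { intros y [Dy hy]. auto. }
  destruct (sup_mono _ _ _ _ Hsub' Hs2 Hs1) as [h| ->]; auto.
  contradiction (Hn1 (HsubH _ Hb2)).
Qed.

Lemma descent_escapes mu d z : S d -> limit_point lt (descent mu) d -> z < mu ->
  exists a b, c d a /\ escapes z a b.
Proof.
  intros Sd Hlp hz. destruct (Hc d Sd) as [Hcd Hotp].
  destruct (descent_mono z mu hz) as [Hsub HsubH].
  assert (Hsup : is_sup lt (Drop lt (c d) (descent z)) d).
  { apply Drop_sup; auto. exact (limit_point_mono _ _ _ Hsub Hlp). }
  assert (Hnsub : ~ subset (Drop lt (c d) (descent z)) (H (descent z))).
  { intro Hs.
    refine (H_escapes _ (descent_club z) (descent_sub z) d Sd _ (conj Hs (conj Hsup _))).
    - apply HsubH, (descent_club mu), Hlp.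
    - eapply Drop_otp; eauto. apply descent_club. }
  apply NNPP; intro Hn. apply Hnsub. intros x [a [Ca [Hne Hs]]].
  apply NNPP; intro Hx. apply Hn. exists a, x. unfold escapes. auto.
Qed.

Lemma descent_contradiction mu : kappa < mu -> is_cardinal lt mu -> False.
Proof.
  intros Hmu Hcard.
  destruct (HSst (limit_point lt (descent mu))
    (club_limit_points kappa Hkappa _ (descent_club mu))) as [d [Sd Hlp]].
  assert (Hab : forall z, exists p : T * T, z < mu -> c d (fst p) /\ escapes z (fst p) (snd p)).
  { intro z. destruct (classic (z < mu)) as [hz|hz].
    - destruct (descent_escapes mu d z Sd Hlp hz) as [a [b Hab]]. now exists (a, b).
    - destruct Hinh as [t]. exists (t, t). tauto. }
  apply choice in Hab as [ab Hab].
  destruct (Hc d Sd) as [_ [f [f1 [f2 _]]]].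
  apply (no_finite_to_one_map kappa mu (fun z => f (fst (ab z))) (fun z => snd (ab z)));
    auto.
  - intros z hz. apply f1, Hab, hz.
  - intros z1 z2 h12 hz2 e. assert (hz1 : z1 < mu) by eauto using lt_trans.
    destruct (Hab z1 hz1) as [Ca1 Hesc1], (Hab z2 hz2) as [Ca2 Hesc2].
    assert (ea : fst (ab z1) = fst (ab z2)).
    { destruct (lt_trichotomy (fst (ab z1)) (fst (ab z2))) as [h|[h|h]]; auto; exfalso;
        apply f2 in h; auto; rewrite e in h; exact (lt_irrefl _ h). }
    rewrite ea in Hesc1. exact (escapes_decreasing z1 z2 _ _ _ h12 Hesc1 Hesc2).
Qed.
End Descent.

Lemma shrinking_club_exists : exists E : T -> Prop,
  club lt E /\ subset E E' /\
  (forall d, S d -> closed_below lt d (Drop lt (c d) E)) /\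
  (forall E'', club lt E'' -> stationary lt (fun d => S d /\ guesses E E'' d)).
Proof.
  destruct Hsucc as [mu [Hmu Hcard]]. apply NNPP; intro Hno.
  assert (Hesc : forall E, exists G, club lt G /\
    (club lt E -> subset E E' -> forall d, S d -> G d -> ~ guesses E G d)).
  { intro E. destruct (classic (club lt E /\ subset E E')) as [[HE HEE']|Hn].
    - destruct (escaping_club E) as [G [HG HGesc]]; [|eauto].
      intro Hst. apply Hno. exists E. split; [exact HE|]. split; [exact HEE'|].
      split; [|exact Hst]. intros d Sd. apply Drop_closed_below; [apply HE | apply Hc, Sd].
    - exists E'. split; [exact HE' | tauto]. }
  apply choice in Hesc as [H HH].
  exact (descent_contradiction H (fun E => proj1 (HH E)) (fun E => proj2 (HH E)) mu Hmu Hcard).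
Qed.
End Shrinking.
End WellOrder.

Theorem mainTheorem2 (T : Type) (lt : T -> T -> Prop)
  (Hwo : is_wellorder lt) (Hlam : lambda_regular lt)
  (kappa : T) (Hkap : regular lt kappa) (Hsucc : succ_lt_lambda lt kappa)
  (S : T -> Prop) (HScf : forall d, S d -> cf_eq lt d kappa)
  (HSst : stationary lt S)
  (c : T -> T -> Prop)
  (Hc : forall d, S d -> club_of lt d (c d) /\ otp lt (c d) kappa)
  (E' : T -> Prop) (HE' : club lt E') :
  exists E : T -> Prop,
    club lt E /\ subset E E' /\
    (forall d, S d -> closed_below lt d (Drop lt (c d) E)) /\
    (forall E'' : T -> Prop, club lt E'' ->
       stationary lt (fun d => S d /\
          subset (Drop lt (c d) E) E'' /\
          is_sup lt (Drop lt (c d) E) d /\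
          otp lt (Drop lt (c d) E) kappa)).
Proof.
  assert (Hinh : inhabited T) by (destruct Hlam as [_ [[t _] _]]; exact (inhabits t)).
  destruct Hkap as [_ [Hkappa _]].
  exact (shrinking_club_exists lt Hwo Hinh Hlam S c E' kappa Hkappa Hsucc HScf HSst Hc HE').
Qed.
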